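(* Let $d_1,d_2$ be positive integers with $2\leq d_1\leq d_2$. Then $$\binom{d_1+d_2}{d_1}\leq 2d_1d_2$$ if and only if $d_1=2$ and $d_2\leq 4$. *)

From mathcomp Require Export all_boot.

From mathcomp Require Import all_boot.
From mathcomp Require Import zify.

(* For [d1 = 2] the inequality is the quadratic [(d2 + 2) (d2 + 1) <= 8 d2].
   For [3 <= d1 <= d2] it always fails: [C(m + n, m) > 2 m n] holds on the
   boundary lines [m = 3] and [n = 3] by the cubic formula for [C(n + 3, 3)],
   and propagates inwards along Pascal's rule, since
   [2 m (n + 1) + 2 (m + 1) n >= 2 (m + 1) (n + 1)]. *)

Lemma bin_addC m n : 'C(m + n, m) = 'C(m + n, n).
Proof. by rewrite -bin_sub ?leq_addr // addKn. Qed.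

Lemma binSS_add m n :
  'C(m.+1 + n.+1, m.+1) = 'C(m.+1 + n, m.+1) + 'C(m + n.+1, m).
Proof. by rewrite addSn binS addSnnS. Qed.

Lemma bin2_add_mul n : 'C(2 + n, 2) * 2 = (n + 2) * (n + 1).
Proof.
change ('C(2 + n, 2) * 2`! = (n + 2) * (n + 1)).
by rewrite bin_ffact add2n !ffactnS ffactn0; lia.
Qed.

Lemma bin3_add_mul n : 'C(3 + n, 3) * 6 = (n + 3) * (n + 2) * (n + 1).
Proof.
change ('C(3 + n, 3) * 3`! = (n + 3) * (n + 2) * (n + 1)).
by rewrite bin_ffact add3n !ffactnS ffactn0; lia.
Qed.

Lemma bin2_add_leq n : 0 < n -> ('C(2 + n, 2) <= 2 * 2 * n) = (n <= 4).
Proof. by move=> n_gt0; have binE := bin2_add_mul n; apply/idP/idP; nia. Qed.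

Lemma bin3_add_gt n : 3 <= n -> 6 * n < 'C(3 + n, 3).
Proof. by move=> n_ge3; have := bin3_add_mul n; nia. Qed.

Lemma bin_add_gt_double_mul m n :
  3 <= m -> 3 <= n -> 2 * m * n < 'C(m + n, m).
Proof.
elim: m n => // m IHm n; rewrite leq_eqVlt => /orP[/eqP <- | m_ge3] n_ge3.
  by move: n_ge3 => /bin3_add_gt; lia.
elim: n n_ge3 => // n IHn; rewrite leq_eqVlt => /orP[/eqP <- | n_ge3].
  by rewrite bin_addC addnC; move: (ltnW m_ge3) => /bin3_add_gt; lia.
have := IHm n.+1 m_ge3 (ltnW n_ge3); have := IHn n_ge3.
rewrite binSS_add; nia.
Qed.

Theorem lemmaA3 (d1 d2 : nat) (h2 : 2 <= d1) (h12 : d1 <= d2) :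
  'C(d1 + d2, d1) <= 2 * d1 * d2 <-> d1 = 2 /\ d2 <= 4.
Proof.
have [-> | d1_ne2] := eqVneq d1 2.
  by rewrite bin2_add_leq; [split=> [|[]] | lia].
have d1_ge3 : 3 <= d1 by lia.
have := bin_add_gt_double_mul d1 d2 d1_ge3 (leq_trans d1_ge3 h12).
by split=> [| [d1_eq2]]; lia.
Qed.
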